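(* Let $a>0$, $l>0$, $b,c\in\mathbb R$, and suppose there is $c_0>0$ with $(ak^2+bk+c)^{1/2}\ge l+c_0k$ for all integers $k\ge1$. Then $$\lim_{s\to0^+}\sum_{k=1}^\infty\left(\frac1{\big((ak^2+bk+c)^{1/2}-l\big)^s}-\frac1{\big((ak^2+bk+c)^{1/2}+l\big)^s}\right)=\frac{2l}{\sqrt a}.$$ *)

From Stdlib Require Import Reals.
From Coquelicot Require Import Coquelicot.
Open Scope R_scope.

Definition qroot (a b c : R) (k : nat) : R :=
  sqrt (a * (INR k) ^ 2 + b * INR k + c).

Definition summand (a b c l s : R) (k : nat) : R :=
  / Rpower (qroot a b c k - l) s - / Rpower (qroot a b c k + l) s.

From Stdlib Require Import Reals Lra Lia.
From Coquelicot Require Import Coquelicot.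
Open Scope R_scope.

(* For [0 < x <= y] and [s >= 0] one has
   [s (y - x) y^(-s-1) <= x^(-s) - y^(-s) <= s (y - x) x^(-s-1)], so the k-th term is
   [2 l s] times a power [-(s+1)] of [sqrt(a k^2 + b k + c) -+ l].  That root stays within
   a bounded distance of [sqrt a * k], hence, for a suitable shift [K], the term is squeezed
   between the telescoping differences [(2 l / sqrt a^(s+1)) (z^(-s) - (z+1)^(-s))] taken at
   [z = k + K] and at [z = k - K - 1], except for [K + 1] terms that are [O(s)].  Summing, the
   series lies between [(2 l / sqrt a^(s+1)) (1 + K)^(-s)] and
   [(K + 1) O(s) + 2 l / sqrt a^(s+1)], and both bounds tend to [2 l / sqrt a] as [s -> 0+]. *)

Definition inv_Rpower (s z : R) : R := / Rpower z s.

Lemma inv_Rpower_pos s z : 0 < inv_Rpower s z.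
Proof. apply Rinv_0_lt_compat, exp_pos. Qed.

Lemma inv_Rpower_1 s : inv_Rpower s 1 = 1.
Proof. unfold inv_Rpower, Rpower. rewrite ln_1, Rmult_0_r, exp_0. apply Rinv_1. Qed.

Lemma inv_Rpower_0 z : inv_Rpower 0 z = 1.
Proof. unfold inv_Rpower, Rpower. rewrite Rmult_0_l, exp_0. apply Rinv_1. Qed.

Lemma inv_Rpower_mult s x y : 0 < x -> 0 < y ->
  inv_Rpower s (x * y) = inv_Rpower s x * inv_Rpower s y.
Proof.
  intros hx hy. unfold inv_Rpower. rewrite <- Rpower_mult_distr by assumption.
  apply Rinv_mult.
Qed.

Lemma inv_Rpower_le_contravar s x y : 0 <= s -> 0 < x <= y ->
  inv_Rpower s y <= inv_Rpower s x.
Proof.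
  intros hs hxy. apply Rinv_le_contravar; [apply exp_pos|].
  apply Rle_Rpower_l; lra.
Qed.

Lemma ln_le_sub_1 x : 0 < x -> ln x <= x - 1.
Proof. intros hx. generalize (exp_ineq1_le (ln x)). rewrite exp_ln; lra. Qed.

(* Writing [y^s = x^s e^u] with [u = s ln (y/x)], both bounds reduce to [1 + v <= exp v]. *)
Lemma Rpower_ratio x y s : 0 < x -> 0 < y ->
  Rpower y s = Rpower x s * exp (s * ln (y / x)).
Proof.
  intros hx hy. unfold Rpower. rewrite <- exp_plus, ln_div by assumption.
  f_equal; ring.
Qed.

Lemma inv_Rpower_sub_le x y s : 0 < x <= y -> 0 <= s ->
  inv_Rpower s x - inv_Rpower s y <= s * (y - x) * inv_Rpower (s + 1) x.
Proof.
  intros hxy hs. unfold inv_Rpower.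
  rewrite (Rpower_ratio x y s), Rpower_plus, Rpower_1 by lra.
  set (u := s * ln (y / x)).
  assert (hu : u <= s * (y / x - 1)).
  { apply Rmult_le_compat_l; [lra|]. apply ln_le_sub_1, Rdiv_lt_0_compat; lra. }
  assert (hexp : 1 - u <= / exp u) by (rewrite <- exp_Ropp; generalize (exp_ineq1_le (- u)); lra).
  assert (hP := exp_pos (s * ln x)). assert (hE := exp_pos u).
  fold (Rpower x s) in *. set (P := Rpower x s) in *.
  replace (/ P - / (P * exp u)) with (/ P * (1 - / exp u)) by (field; lra).
  replace (s * (y - x) * / (P * x)) with (/ P * (s * (y / x - 1))) by (field; lra).
  apply Rmult_le_compat_l; [left; apply Rinv_0_lt_compat|]; lra.
Qed.

Lemma inv_Rpower_sub_ge x y s : 0 < x <= y -> 0 <= s ->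
  s * (y - x) * inv_Rpower (s + 1) y <= inv_Rpower s x - inv_Rpower s y.
Proof.
  intros hxy hs. unfold inv_Rpower.
  rewrite (Rpower_ratio y x s), Rpower_plus, Rpower_1 by lra.
  set (u := s * ln (x / y)).
  assert (hu : u <= s * (x / y - 1)).
  { apply Rmult_le_compat_l; [lra|]. apply ln_le_sub_1, Rdiv_lt_0_compat; lra. }
  assert (hexp : 1 - u <= / exp u) by (rewrite <- exp_Ropp; generalize (exp_ineq1_le (- u)); lra).
  assert (hP := exp_pos (s * ln y)). assert (hE := exp_pos u).
  fold (Rpower y s) in *. set (P := Rpower y s) in *.
  replace (/ (P * exp u) - / P) with (/ P * (/ exp u - 1)) by (field; lra).
  replace (s * (y - x) * / (P * y)) with (/ P * (s * (1 - x / y))) by (field; lra).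
  apply Rmult_le_compat_l; [left; apply Rinv_0_lt_compat|]; lra.
Qed.

Lemma is_lim_seq_inv_Rpower s c : 0 < s ->
  is_lim_seq (fun n => inv_Rpower s (INR n + c)) 0.
Proof.
  intros hs. change (Finite 0) with (Rbar_inv p_infty).
  apply is_lim_seq_inv; [|discriminate].
  apply (filterlim_comp _ _ _ (fun n => s * ln (INR n + c)) exp _ (Rbar_locally p_infty));
    [|exact is_lim_exp_p].
  eapply is_lim_seq_mult; [apply is_lim_seq_const| |].
  - apply (filterlim_comp _ _ _ (fun n => INR n + c) ln _ (Rbar_locally p_infty));
      [|exact is_lim_ln_p].
    eapply is_lim_seq_plus; [apply is_lim_seq_INR|apply is_lim_seq_const|reflexivity].
  - apply is_Rbar_mult_sym, is_Rbar_mult_p_infty_pos. exact hs.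
Qed.

Lemma Rabs_sub_le_sqr_div q m : 0 <= q -> 0 < m -> Rabs (q - m) <= Rabs (q ^ 2 - m ^ 2) / m.
Proof.
  intros hq hm.
  replace (q ^ 2 - m ^ 2) with ((q - m) * (q + m)) by ring.
  rewrite Rabs_mult, (Rabs_right (q + m)) by lra.
  apply Rle_div_r; [exact hm|].
  generalize (Rabs_pos (q - m)); nra.
Qed.

Lemma qroot_near a b c k : 0 < a -> (1 <= k)%nat -> 0 < qroot a b c k ->
  Rabs (qroot a b c k - sqrt a * INR k) <= (Rabs b + Rabs c) / sqrt a.
Proof.
  intros ha hk hq.
  assert (hk1 : 1 <= INR k) by (apply (le_INR 1); exact hk).
  assert (hsa : 0 < sqrt a) by (apply sqrt_lt_R0; exact ha).
  assert (hz : 0 <= a * INR k ^ 2 + b * INR k + c).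
  { unfold qroot in hq. destruct (Rle_lt_dec 0 (a * INR k ^ 2 + b * INR k + c)) as [h|h];
      [exact h|rewrite sqrt_neg_0 in hq; lra]. }
  assert (hsqr : qroot a b c k ^ 2 - (sqrt a * INR k) ^ 2 = b * INR k + c).
  { unfold qroot. rewrite Rpow_mult_distr, !pow2_sqrt by lra. ring. }
  assert (hlin : Rabs (b * INR k + c) <= (Rabs b + Rabs c) * INR k).
  { eapply Rle_trans; [apply Rabs_triang|].
    rewrite Rabs_mult, (Rabs_right (INR k)) by lra.
    generalize (Rabs_pos c); nra. }
  eapply Rle_trans; [apply Rabs_sub_le_sqr_div; nra|].
  rewrite hsqr. apply Rle_div_l; [nra|].
  replace ((Rabs b + Rabs c) / sqrt a * (sqrt a * INR k)) with ((Rabs b + Rabs c) * INR k)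
    by (field; lra).
  exact hlin.
Qed.

Lemma sum_n_m_le_telescope (f g : nat -> R) m N : (m <= S N)%nat ->
  (forall n, (m <= n <= N)%nat -> f n <= g n - g (S n)) ->
  sum_n_m f m N <= g m - g (S N).
Proof.
  intros hmN hf. induction N as [|N IH].
  - destruct m as [|[|m]]; [|rewrite sum_n_m_zero by lia; unfold zero; simpl; lra|lia].
    rewrite sum_n_n. apply hf. lia.
  - destruct (Nat.eq_dec m (S (S N))) as [->|hm].
    + rewrite sum_n_m_zero by lia. unfold zero; simpl; lra.
    + rewrite sum_n_Sm by lia.
      assert (h1 := IH ltac:(lia) ltac:(intros n hn; apply hf; lia)).
      assert (h2 := hf (S N) ltac:(lia)). unfold plus; simpl. lra.
Qed.

Lemma sum_n_ge_telescope (f g : nat -> R) N :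
  (forall n, (n <= N)%nat -> g n - g (S n) <= f n) ->
  g O - g (S N) <= sum_n f N.
Proof.
  intros hf. induction N as [|N IH].
  - rewrite sum_O. apply hf. lia.
  - rewrite sum_Sn. assert (h1 := IH ltac:(intros n hn; apply hf; lia)).
    assert (h2 := hf (S N) (le_n _)). unfold plus; simpl. lra.
Qed.

Lemma sum_n_le_of_nonneg (f : nat -> R) N M : (forall n, 0 <= f n) -> (N <= M)%nat ->
  sum_n f N <= sum_n f M.
Proof.
  intros hf hNM. induction hNM as [|M _ IH]; [lra|].
  rewrite sum_Sn. unfold plus; simpl. generalize (hf (S M)); lra.
Qed.

Lemma filterlim_at_right_of_ex_derive (f : R -> R) x L : ex_derive f x -> f x = L ->
  filterlim f (at_right x) (locally L).
Proof.
  intros hd <-. apply (filterlim_filter_le_1 (F := locally x)).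
  - intros P [d H]. exists d. intros y hy _. apply H, hy.
  - exact (ex_derive_continuous f x hd).
Qed.

Section SummandBounds.

Variables (a b c l c0 : R) (K : nat).
Hypotheses (ha : 0 < a) (hl : 0 < l) (hc0 : 0 < c0)
  (hgrowth : forall k : nat, (1 <= k)%nat -> qroot a b c k >= l + c0 * INR k)
  (hK : (Rabs b + Rabs c) / sqrt a + l <= sqrt a * INR K).

Definition telescope_coef (s : R) : R := 2 * l * inv_Rpower (s + 1) (sqrt a).
Definition head_coef (s : R) : R := 2 * l * s * inv_Rpower (s + 1) c0.

Lemma summand_between s k : (1 <= k)%nat -> 0 <= s ->
  2 * l * s * inv_Rpower (s + 1) (qroot a b c k + l) <= summand a b c l s k <=
  2 * l * s * inv_Rpower (s + 1) (qroot a b c k - l).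
Proof.
  intros hk hs.
  assert (hk1 : 1 <= INR k) by (apply (le_INR 1); exact hk).
  assert (hq := hgrowth k hk).
  assert (hxy : 0 < qroot a b c k - l <= qroot a b c k + l) by nra.
  unfold summand.
  replace (2 * l * s) with (s * (qroot a b c k + l - (qroot a b c k - l))) by ring.
  split; [apply inv_Rpower_sub_ge|apply inv_Rpower_sub_le]; assumption.
Qed.

Lemma qroot_between k : (1 <= k)%nat ->
  sqrt a * (INR k - INR K) <= qroot a b c k - l /\
  qroot a b c k + l <= sqrt a * (INR k + INR K).
Proof.
  intros hk.
  assert (hk1 : 1 <= INR k) by (apply (le_INR 1); exact hk).
  assert (hq := hgrowth k hk).
  assert (hnear := qroot_near a b c k ha hk ltac:(nra)).
  apply Rabs_le_between in hnear. lra.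
Qed.

Lemma summand_nonneg s n : 0 <= s -> 0 <= summand a b c l s (S n).
Proof.
  intros hs.
  destruct (summand_between s (S n)) as [hlo _]; [lia|exact hs|].
  eapply Rle_trans; [|exact hlo].
  generalize (inv_Rpower_pos (s + 1) (qroot a b c (S n) + l)).
  intros; repeat apply Rmult_le_pos; lra.
Qed.

Lemma summand_le_head s n : 0 <= s -> summand a b c l s (S n) <= head_coef s.
Proof.
  intros hs.
  destruct (summand_between s (S n)) as [_ hhi]; [lia|exact hs|].
  eapply Rle_trans; [exact hhi|].
  assert (hn : 1 <= INR (S n)) by (apply (le_INR 1); lia).
  assert (hq := hgrowth (S n) ltac:(lia)).
  assert (hmono := inv_Rpower_le_contravar (s + 1) c0 (qroot a b c (S n) - l)
    ltac:(lra) ltac:(nra)).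
  unfold head_coef. apply Rmult_le_compat_l; nra.
Qed.

Lemma summand_ge_telescope s n : 0 <= s ->
  telescope_coef s * (inv_Rpower s (INR (S n) + INR K) - inv_Rpower s (INR (S (S n)) + INR K))
  <= summand a b c l s (S n).
Proof.
  intros hs.
  destruct (summand_between s (S n)) as [hlo _]; [lia|exact hs|].
  eapply Rle_trans; [|exact hlo].
  set (z := INR (S n) + INR K).
  assert (hz : 1 <= z) by (unfold z; rewrite S_INR; generalize (pos_INR n) (pos_INR K); lra).
  assert (hsa : 0 < sqrt a) by (apply sqrt_lt_R0; exact ha).
  destruct (qroot_between (S n)) as [_ hup]; [lia|].
  assert (hq := hgrowth (S n) ltac:(lia)).
  assert (hpos : 0 < qroot a b c (S n) + l) by (generalize (pos_INR (S n)); nra).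
  assert (hmono := inv_Rpower_le_contravar (s + 1) (qroot a b c (S n) + l) (sqrt a * z)
    ltac:(lra) (conj hpos hup)).
  assert (hdiff := inv_Rpower_sub_le z (z + 1) s ltac:(lra) hs).
  replace (z + 1 - z) with 1 in hdiff by ring.
  replace (INR (S (S n)) + INR K) with (z + 1) by (unfold z; rewrite (S_INR (S n)); ring).
  rewrite inv_Rpower_mult in hmono by lra.
  assert (hcoef := inv_Rpower_pos (s + 1) (sqrt a)).
  unfold telescope_coef.
  apply Rle_trans with (2 * l * s * (inv_Rpower (s + 1) (sqrt a) * inv_Rpower (s + 1) z)).
  - replace (2 * l * s * (inv_Rpower (s + 1) (sqrt a) * inv_Rpower (s + 1) z))
      with (2 * l * inv_Rpower (s + 1) (sqrt a) * (s * 1 * inv_Rpower (s + 1) z)) by ring.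
    apply Rmult_le_compat_l; [nra|exact hdiff].
  - apply Rmult_le_compat_l; [nra|exact hmono].
Qed.

Lemma summand_le_telescope s n : 0 <= s -> (K < n)%nat ->
  summand a b c l s (S n) <=
  telescope_coef s * (inv_Rpower s (INR n - INR K) - inv_Rpower s (INR (S n) - INR K)).
Proof.
  intros hs hn.
  destruct (summand_between s (S n)) as [_ hhi]; [lia|exact hs|].
  eapply Rle_trans; [exact hhi|].
  set (z := INR (S n) - INR K).
  assert (hz : 2 <= z).
  { unfold z. rewrite S_INR. generalize (le_INR (S K) n hn). rewrite S_INR. lra. }
  assert (hsa : 0 < sqrt a) by (apply sqrt_lt_R0; exact ha).
  destruct (qroot_between (S n)) as [hlow _]; [lia|].
  replace (INR (S n) - INR K) with z in hlow by reflexivity.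
  assert (hmono := inv_Rpower_le_contravar (s + 1) (sqrt a * z) (qroot a b c (S n) - l)
    ltac:(lra) ltac:(split; [nra|exact hlow])).
  assert (hdiff := inv_Rpower_sub_ge (z - 1) z s ltac:(lra) hs).
  replace (z - (z - 1)) with 1 in hdiff by ring.
  replace (INR n - INR K) with (z - 1) by (unfold z; rewrite S_INR; ring).
  rewrite inv_Rpower_mult in hmono by lra.
  assert (hcoef := inv_Rpower_pos (s + 1) (sqrt a)).
  unfold telescope_coef.
  apply Rle_trans with (2 * l * s * (inv_Rpower (s + 1) (sqrt a) * inv_Rpower (s + 1) z)).
  - apply Rmult_le_compat_l; [nra|exact hmono].
  - replace (2 * l * s * (inv_Rpower (s + 1) (sqrt a) * inv_Rpower (s + 1) z))
      with (2 * l * inv_Rpower (s + 1) (sqrt a) * (s * 1 * inv_Rpower (s + 1) z)) by ring.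
    apply Rmult_le_compat_l; [nra|exact hdiff].
Qed.

Lemma sum_n_summand_ge s N : 0 <= s ->
  telescope_coef s * (inv_Rpower s (1 + INR K) - inv_Rpower s (INR (S (S N)) + INR K))
  <= sum_n (fun n => summand a b c l s (S n)) N.
Proof.
  intros hs.
  set (g n := telescope_coef s * inv_Rpower s (INR (S n) + INR K)).
  replace (telescope_coef s * _) with (g O - g (S N)) by (unfold g; simpl INR; ring).
  apply sum_n_ge_telescope. intros n _.
  unfold g. rewrite <- Rmult_minus_distr_l. apply summand_ge_telescope, hs.
Qed.

Lemma sum_n_summand_le s N : 0 <= s ->
  sum_n (fun n => summand a b c l s (S n)) N <= INR (S K) * head_coef s + telescope_coef s.
Proof.
  intros hs. set (t n := summand a b c l s (S n)).
  apply Rle_trans with (sum_n t (S K + N)).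
  { apply sum_n_le_of_nonneg; [intros n; apply summand_nonneg, hs|lia]. }
  unfold sum_n. rewrite (sum_n_m_Chasles t 0 K (S K + N)) by lia.
  assert (hhead : sum_n_m t 0 K <= INR (S K) * head_coef s).
  { replace (INR (S K) * head_coef s) with (sum_n_m (fun _ => head_coef s) 0 K)
      by (rewrite sum_n_m_const, Nat.sub_0_r; reflexivity).
    apply sum_n_m_le. intros n. apply summand_le_head, hs. }
  set (g n := telescope_coef s * inv_Rpower s (INR n - INR K)).
  assert (htail : sum_n_m t (S K) (S K + N) <= g (S K) - g (S (S K + N))).
  { apply sum_n_m_le_telescope; [lia|]. intros n hn.
    unfold g. rewrite <- Rmult_minus_distr_l. apply summand_le_telescope; [exact hs|lia]. }
  assert (hg : g (S K) = telescope_coef s).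
  { unfold g. rewrite S_INR. replace (INR K + 1 - INR K) with 1 by ring.
    rewrite inv_Rpower_1. ring. }
  assert (hgpos : 0 <= g (S (S K + N))).
  { unfold g, telescope_coef. generalize (inv_Rpower_pos (s + 1) (sqrt a))
      (inv_Rpower_pos s (INR (S (S K + N)) - INR K)). intros; repeat apply Rmult_le_pos; lra. }
  apply Rle_trans with (INR (S K) * head_coef s + (g (S K) - g (S (S K + N)))).
  - apply Rplus_le_compat; assumption.
  - lra.
Qed.

Lemma series_summand_bounds s : 0 < s ->
  ex_series (fun n => summand a b c l s (S n)) /\
  telescope_coef s * inv_Rpower s (1 + INR K) <= Series (fun n => summand a b c l s (S n))
  <= INR (S K) * head_coef s + telescope_coef s.
Proof.
  intros hs. set (t n := summand a b c l s (S n)).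
  assert (hincr : forall N, sum_n t N <= sum_n t (S N)).
  { intros N. apply sum_n_le_of_nonneg; [intros n; apply summand_nonneg; lra|lia]. }
  destruct (ex_finite_lim_seq_incr (sum_n t) _ hincr
    (fun N => sum_n_summand_le s N ltac:(lra))) as [L hL].
  assert (hser : is_series t L) by exact hL.
  rewrite (is_series_unique t L hser).
  split; [exists L; exact hser|split].
  - assert (hlim : is_lim_seq (fun N => telescope_coef s *
        (inv_Rpower s (1 + INR K) - inv_Rpower s (INR (S (S N)) + INR K)))
        (telescope_coef s * (inv_Rpower s (1 + INR K) - 0))).
    { apply is_lim_seq_mult'; [apply is_lim_seq_const|].
      apply is_lim_seq_minus'; [apply is_lim_seq_const|].
      apply (is_lim_seq_ext (fun N => inv_Rpower s (INR N + (2 + INR K)))).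
      { intros N. rewrite !S_INR. f_equal. ring. }
      apply is_lim_seq_inv_Rpower, hs. }
    rewrite Rminus_0_r in hlim.
    exact (is_lim_seq_le _ _ _ _ (fun N => sum_n_summand_ge s N ltac:(lra)) hlim hL).
  - exact (is_lim_seq_le _ _ _ _ (fun N => sum_n_summand_le s N ltac:(lra)) hL
      (is_lim_seq_const _)).
Qed.

End SummandBounds.

Lemma telescope_coef_0 a l : 0 < a -> telescope_coef a l 0 = 2 * l / sqrt a.
Proof.
  intros ha. unfold telescope_coef, inv_Rpower.
  rewrite Rplus_0_l, Rpower_1 by (apply sqrt_lt_R0, ha). reflexivity.
Qed.

Lemma head_coef_0 l c0 : head_coef l c0 0 = 0.
Proof. unfold head_coef. ring. Qed.

Lemma exists_nat_scaled_ge x y : 0 < y -> exists K : nat, x <= y * INR K.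
Proof.
  intros hy. destruct (INR_unbounded (x / y)) as [K hK]. exists K.
  apply Rgt_lt, (Rmult_lt_compat_l y) in hK; [|exact hy].
  replace (y * (x / y)) with x in hK by (field; lra). lra.
Qed.

Theorem mainTheorem13 (a l b c : R) (ha : 0 < a) (hl : 0 < l)
  (hc0 : exists c0 : R, 0 < c0 /\
     forall k : nat, (1 <= k)%nat -> qroot a b c k >= l + c0 * INR k) :
  (forall s : R, 0 < s -> ex_series (fun n : nat => summand a b c l s (S n))) /\
  filterlim (fun s : R => Series (fun n : nat => summand a b c l s (S n)))
    (at_right 0) (locally (2 * l / sqrt a)).
Proof.
  destruct hc0 as [c0 [hc0 hgrowth]].
  assert (hsa : 0 < sqrt a) by (apply sqrt_lt_R0, ha).
  destruct (exists_nat_scaled_ge ((Rabs b + Rabs c) / sqrt a + l) (sqrt a) hsa) as [K hK].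
  assert (hbounds := series_summand_bounds a b c l c0 K ha hl hc0 hgrowth hK).
  split; [intros s hs; apply hbounds, hs|].
  apply (filterlim_le_le (F := at_right 0)
    (fun s => telescope_coef a l s * inv_Rpower s (1 + INR K)) _
    (fun s => INR (S K) * head_coef l c0 s + telescope_coef a l s) (Finite (2 * l / sqrt a))).
  - exists (mkposreal 1 Rlt_0_1). intros s _ hs. apply hbounds, hs.
  - apply filterlim_at_right_of_ex_derive.
    + unfold telescope_coef, inv_Rpower, Rpower. auto_derive.
      repeat split; apply Rgt_not_eq, exp_pos.
    + rewrite inv_Rpower_0, telescope_coef_0 by exact ha. ring.
  - apply filterlim_at_right_of_ex_derive.
    + unfold telescope_coef, head_coef, inv_Rpower, Rpower. auto_derive.
      repeat split; apply Rgt_not_eq, exp_pos.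
    + rewrite head_coef_0, telescope_coef_0 by exact ha. ring.
Qed.
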